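(* Let $H_1$, $G_L$, the Coxeter generators $a_1,\dots,a_5,a_{1'}$ and the labels $1,\dots,6,\overline1,\dots,\overline6$ of $G_L\backslash H_1$ be as in the context, with $H_1$ acting on $G_L\backslash H_1$ by right multiplication. Then: (a) for $1\le k\le 5$, the generator $a_k$ exchanges the coset labeled $k$ with the coset labeled $k+1$, exchanges $\overline{k}$ with $\overline{k+1}$, and fixes the other cosets; (b) the generator $a_{1'}$ exchanges the coset labeled $1$ with the coset labeled $\overline2$, exchanges $\overline1$ with $2$, and fixes the other cosets.
   Context: Let $V=\{(A,B,C,D,E,F,G)^T\in\mathbb{C}^7: E+F+G-A-B-C-D=1\}$. A transposition $(ij)\in S_7$ is identified with the $7\times7$ permutation matrix swapping coordinates $i$ and $j$. Let $X_1\in GL(7,\mathbb{C})$ have rows $e_1$, $-e_3+e_5$, $-e_2+e_5$, $e_4$, $e_5$, $-e_2-e_3+e_5+e_6$, $-e_2-e_3+e_5+e_7$, so that for $\vec x\in V$, $X_1\vec x=(A,E-C,E-B,D,E,1+A+D-G,1+A+D-F)^T$. Let $H_1=\langle(12),(23),(34),(56),(67),X_1\rangle\cong W(D_6)$, with Coxeter generators $a_1=(23),a_2=(34),a_3=X_1,a_4=(56),a_5=(67),a_{1'}=(14)$. Let $G_L=\langle(12),(23),(34),(67),(57)X_1(57)\rangle$ (index 12 in $H_1$). The 12 right cosets of $G_L$ in $H_1$ are labeled as follows: the coset labeled $\sigma$ is $G_L\beta_\sigma$, where $\beta_\sigma\in H_1$ satisfies $\beta_\sigma\vec x=u_\sigma$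 for all $\vec x\in V$, with $u_6=(A,B,C,D,G,F,E)$, $u_5=(A,B,C,D,F,E,G)$, $u_4=(A,B,C,D,E,F,G)$, $u_3=(A,1+A-E,1+A-F,1+A-G,1+A-D,1+A-B,1+A-C)$, $u_2=(A,1+A-E,1+A-F,1+A-G,1+A-C,1+A-B,1+A-D)$, $u_1=(A,1+A-E,1+A-F,1+A-G,1+A-B,1+A-C,1+A-D)$, $u_{\overline6}=(1-A,1-B,1-C,1-D,2-G,2-F,2-E)$, $u_{\overline5}=(1-A,1-B,1-C,1-D,2-F,2-E,2-G)$, $u_{\overline4}=(1-A,1-B,1-C,1-D,2-E,2-F,2-G)$, $u_{\overline3}=(1-A,E-A,F-A,G-A,1+D-A,1+B-A,1+C-A)$, $u_{\overline2}=(1-A,E-A,F-A,G-A,1+C-A,1+B-A,1+D-A)$, $u_{\overline1}=(1-A,E-A,F-A,G-A,1+B-A,1+C-A,1+D-A)$ (all transposed to column vectors). An involution $s\in H_1$ acts by $s(G_L\beta)=G_L\beta s$. *)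

From HB Require Import structures.
From mathcomp Require Import all_boot all_order all_algebra all_fingroup.
Set Implicit Arguments. Unset Strict Implicit. Unset Printing Implicit Defensive.
Import Order.TTheory GRing.Theory Num.Theory.
Local Open Scope ring_scope.

Section Defs.
Variable C : numClosedFieldType.

(* the k-th coordinate (0-based) of a column vector of C^7:
   coordinates 0..6 are A,B,C,D,E,F,G *)
Definition co (x : 'cV[C]_7) (k : nat) : C := x (@inord 6 k) ord0.

Definition vec7 (l : seq C) : 'cV[C]_7 := \col_(i < 7) nth 0 l i.

Definition inV (x : 'cV[C]_7) : Prop :=
  co x 4 + co x 5 + co x 6 - co x 0 - co x 1 - co x 2 - co x 3 = 1.

(* transposition (i j) (1-based, as in the paper) as a 7x7 permutation matrix *)
Definition tr (i j : nat) : 'M[C]_7 := tperm_mx (@inord 6 i.-1) (@inord 6 j.-1).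

Definition X1_rows : seq (seq int) :=
  [:: [:: 1; 0; 0; 0; 0; 0; 0];
      [:: 0; 0; -1; 0; 1; 0; 0];
      [:: 0; -1; 0; 0; 1; 0; 0];
      [:: 0; 0; 0; 1; 0; 0; 0];
      [:: 0; 0; 0; 0; 1; 0; 0];
      [:: 0; -1; -1; 0; 1; 1; 0];
      [:: 0; -1; -1; 0; 1; 0; 1]]%R.
Definition X1 : 'M[C]_7 :=
  \matrix_(i < 7, j < 7) ((nth 0 (nth [::] X1_rows i) j)%:~R : C).

Inductive gen_by (S : seq 'M[C]_7) : 'M[C]_7 -> Prop :=
| gen_one : gen_by S 1%:M
| gen_mul : forall A s, gen_by S A -> s \in S -> gen_by S (A *m s)
| gen_mulV : forall A s, gen_by S A -> s \in S -> gen_by S (A *m invmx s).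

Definition H1 : 'M[C]_7 -> Prop :=
  gen_by [:: tr 1 2; tr 2 3; tr 3 4; tr 5 6; tr 6 7; X1].

Definition GL_ : 'M[C]_7 -> Prop :=
  gen_by [:: tr 1 2; tr 2 3; tr 3 4; tr 6 7; tr 5 7 *m X1 *m tr 5 7].

(* Coxeter generators a_1..a_5 (index k : 'I_5 stands for a_{k+1}) and a_{1'} *)
Definition a_gen (k : 'I_5) : 'M[C]_7 := nth 0 [:: tr 2 3; tr 3 4; X1; tr 5 6; tr 6 7] k.
Definition a_1' : 'M[C]_7 := tr 1 4.

Definition same_rcoset (G : 'M[C]_7 -> Prop) (A B : 'M[C]_7) : Prop :=
  exists g, G g /\ A = g *m B.

(* Labels: (false, i) is the label i+1, (true, i) is the label \overline{i+1}. *)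
Definition label := (bool * 'I_6)%type.

Definition u (s : label) (x : 'cV[C]_7) : 'cV[C]_7 :=
  let A := co x 0 in let B := co x 1 in let C' := co x 2 in let D := co x 3 in
  let E := co x 4 in let F := co x 5 in let G := co x 6 in
  match s.1, val s.2 with
  | false, 5 => vec7 [:: A; B; C'; D; G; F; E]
  | false, 4 => vec7 [:: A; B; C'; D; F; E; G]
  | false, 3 => vec7 [:: A; B; C'; D; E; F; G]
  | false, 2 => vec7 [:: A; 1+A-E; 1+A-F; 1+A-G; 1+A-D; 1+A-B; 1+A-C']
  | false, 1 => vec7 [:: A; 1+A-E; 1+A-F; 1+A-G; 1+A-C'; 1+A-B; 1+A-D]
  | false, _ => vec7 [:: A; 1+A-E; 1+A-F; 1+A-G; 1+A-B; 1+A-C'; 1+A-D]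
  | true, 5 => vec7 [:: 1-A; 1-B; 1-C'; 1-D; 2-G; 2-F; 2-E]
  | true, 4 => vec7 [:: 1-A; 1-B; 1-C'; 1-D; 2-F; 2-E; 2-G]
  | true, 3 => vec7 [:: 1-A; 1-B; 1-C'; 1-D; 2-E; 2-F; 2-G]
  | true, 2 => vec7 [:: 1-A; E-A; F-A; G-A; 1+D-A; 1+B-A; 1+C'-A]
  | true, 1 => vec7 [:: 1-A; E-A; F-A; G-A; 1+C'-A; 1+B-A; 1+D-A]
  | true, _ => vec7 [:: 1-A; E-A; F-A; G-A; 1+B-A; 1+C'-A; 1+D-A]
  end.

Definition is_beta (s : label) (b : 'M[C]_7) : Prop :=
  H1 b /\ forall x : 'cV[C]_7, inV x -> b *m x = u s x.

End Defs.

Definition act_a (k : 'I_5) (s : label) : label :=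
  if val s.2 == val k then (s.1, @inord 5 k.+1)
  else if val s.2 == k.+1 then (s.1, @inord 5 k)
  else s.

Definition act_a1' (s : label) : label :=
  match s.1, val s.2 with
  | false, 0 => (true, @inord 5 1)
  | true, 1 => (false, @inord 5 0)
  | true, 0 => (false, @inord 5 1)
  | false, 1 => (true, @inord 5 0)
  | _, _ => s
  end.

From HB Require Import structures.
From mathcomp Require Import all_boot all_order all_algebra all_fingroup.
From mathcomp Require Import ring.
Import Order.TTheory GRing.Theory Num.Theory.
Local Open Scope ring_scope.
Set Implicit Arguments. Unset Strict Implicit.

(* For every label s, writing the constant 1 as E+F+G-A-B-C-D turns u_s into a
   linear map with an integer matrix beta_s, and beta_s is an explicit word in the
   generators of H_1.  Since V is an affine hyperplane not through 0, it spans C^7,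
   so a matrix is determined by its values on V and every admissible beta_s is this
   one.  The coset claims G_L beta_s a = G_L beta_t then reduce to integer identities
   beta_s a = g beta_t with g an explicit word in the generators of G_L, which are
   checked by evaluation. *)

(* Integer matrices are encoded as lists of rows so that their products reduce
   under vm_compute, which big operators (being opaque) would block. *)
Definition int_rows := seq (seq int).

Definition entry (M : int_rows) (i j : nat) : int := nth 0 (nth [::] M i) j.

Definition mul_rows (n : nat) (M N : int_rows) : int_rows :=
  mkseq (fun i => mkseq (fun k =>
    foldr (fun j acc => entry M i j * entry N j k + acc) 0 (iota 0 n)) n) n.

Definition id_rows (n : nat) : int_rows :=
  mkseq (fun i => mkseq (fun j => (i == j)%:Z) n) n.

Definition swapn (i j r : nat) : nat :=
  if r == i then j else if r == j then i else r.

Definition tperm_rows (n i j : nat) : int_rows :=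
  mkseq (fun r => mkseq (fun c => (swapn i j r == c)%:Z) n) n.

Definition word_rows (n : nat) (gens : seq int_rows) (w : seq nat) : int_rows :=
  foldl (fun M g => mul_rows n M (nth [::] gens g)) (id_rows n) w.

Section IntMatrix.
Variable R : pzRingType.

Definition intmx (n : nat) (M : int_rows) : 'M[R]_n :=
  \matrix_(i, j) (entry M i j)%:~R.

Lemma intmx_mul n M N : intmx n (mul_rows n M N) = intmx n M *m intmx n N.
Proof.
apply/matrixP => i k; rewrite !mxE /mul_rows /entry !nth_mkseq //.
under eq_bigr do rewrite !mxE.
rewrite -(big_mkord xpredT (fun j => (entry M i j)%:~R * (entry N j k)%:~R)).
rewrite /index_iota subn0 /entry.
elim: (iota 0 n) => [|j s IH]; first by rewrite big_nil.
by rewrite big_cons -IH /= rmorphD rmorphM.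
Qed.

Lemma intmx_id n : intmx n (id_rows n) = 1%:M.
Proof. by apply/matrixP => i j; rewrite !mxE /entry /id_rows !nth_mkseq. Qed.

Lemma intmx_word n gens w :
  intmx n (word_rows n gens w)
  = foldl mulmx 1%:M [seq intmx n (nth [::] gens g) | g <- w].
Proof.
elim/last_ind: w => [|w g IH]; first exact: intmx_id.
by rewrite map_rcons /word_rows !foldl_rcons intmx_mul -IH.
Qed.

Lemma tperm_mx_intmx n i j : (i <= n)%N -> (j <= n)%N ->
  tperm_mx (inord i : 'I_n.+1) (inord j) = intmx n.+1 (tperm_rows n.+1 i j).
Proof.
move=> le_in le_jn; apply/matrixP => r c.
rewrite /tperm_mx !mxE /entry /tperm_rows !nth_mkseq // -val_eqE permE /=.
rewrite -!val_eqE /= !inordK // /swapn.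
by case: ifP => _; [|case: ifP => _]; rewrite ?inordK.
Qed.

End IntMatrix.

Lemma eq_mx_on_hyperplane (R : pzRingType) m n (l : 'rV[R]_n) (x0 : 'cV[R]_n)
    (A B : 'M[R]_(m, n)) :
  l *m x0 = 1%:M -> (forall x, l *m x = 1%:M -> A *m x = B *m x) -> A = B.
Proof.
move=> lx0 eqAB.
have eqAB0 := eqAB x0 lx0.
have eqAB_ker (y : 'cV_n) : l *m y = 0 -> A *m y = B *m y.
  move=> ly0; have /eqAB : l *m (x0 + y) = 1%:M by rewrite mulmxDr lx0 ly0 addr0.
  by rewrite !mulmxDr eqAB0 => /addrI.
have eqAB_all (y : 'cV_n) : A *m y = B *m y.
  pose z := y - x0 *m (l *m y).
  have lz : l *m z = 0 by rewrite mulmxBr mulmxA lx0 mul1mx subrr.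
  have -> : y = x0 *m (l *m y) + z by rewrite addrC subrK.
  by clearbody z; rewrite !mulmxDr !mulmxA eqAB0 eqAB_ker.
apply/matrixP => i j; have /colP/(_ i) := eqAB_all (delta_mx j 0).
by rewrite -!colE !mxE.
Qed.

Definition H1_gens : seq int_rows :=
  [:: tperm_rows 7 0 1; tperm_rows 7 1 2; tperm_rows 7 2 3;
      tperm_rows 7 4 5; tperm_rows 7 5 6; X1_rows].

Definition GL_gens : seq int_rows :=
  [:: tperm_rows 7 0 1; tperm_rows 7 1 2; tperm_rows 7 2 3; tperm_rows 7 5 6;
      mul_rows 7 (mul_rows 7 (tperm_rows 7 4 6) X1_rows) (tperm_rows 7 4 6)].

Definition a_rows (k : nat) : int_rows :=
  nth [::] [:: tperm_rows 7 1 2; tperm_rows 7 2 3; X1_rows;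
               tperm_rows 7 4 5; tperm_rows 7 5 6] k.

Definition a1'_rows : int_rows := tperm_rows 7 0 3.

Definition beta_rows (s : bool * nat) : int_rows :=
  match s with
  | (false, 0) =>
    [:: [::  1;  0;  0;  0;  0;  0;  0];
        [::  0; -1; -1; -1;  0;  1;  1];
        [::  0; -1; -1; -1;  1;  0;  1];
        [::  0; -1; -1; -1;  1;  1;  0];
        [::  0; -2; -1; -1;  1;  1;  1];
        [::  0; -1; -2; -1;  1;  1;  1];
        [::  0; -1; -1; -2;  1;  1;  1]]
  | (false, 1) =>
    [:: [::  1;  0;  0;  0;  0;  0;  0];
        [::  0; -1; -1; -1;  0;  1;  1];
        [::  0; -1; -1; -1;  1;  0;  1];
        [::  0; -1; -1; -1;  1;  1;  0];
        [::  0; -1; -2; -1;  1;  1;  1];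
        [::  0; -2; -1; -1;  1;  1;  1];
        [::  0; -1; -1; -2;  1;  1;  1]]
  | (false, 2) =>
    [:: [::  1;  0;  0;  0;  0;  0;  0];
        [::  0; -1; -1; -1;  0;  1;  1];
        [::  0; -1; -1; -1;  1;  0;  1];
        [::  0; -1; -1; -1;  1;  1;  0];
        [::  0; -1; -1; -2;  1;  1;  1];
        [::  0; -2; -1; -1;  1;  1;  1];
        [::  0; -1; -2; -1;  1;  1;  1]]
  | (false, 3) =>
    [:: [::  1;  0;  0;  0;  0;  0;  0];
        [::  0;  1;  0;  0;  0;  0;  0];
        [::  0;  0;  1;  0;  0;  0;  0];
        [::  0;  0;  0;  1;  0;  0;  0];
        [::  0;  0;  0;  0;  1;  0;  0];
        [::  0;  0;  0;  0;  0;  1;  0];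
        [::  0;  0;  0;  0;  0;  0;  1]]
  | (false, 4) =>
    [:: [::  1;  0;  0;  0;  0;  0;  0];
        [::  0;  1;  0;  0;  0;  0;  0];
        [::  0;  0;  1;  0;  0;  0;  0];
        [::  0;  0;  0;  1;  0;  0;  0];
        [::  0;  0;  0;  0;  0;  1;  0];
        [::  0;  0;  0;  0;  1;  0;  0];
        [::  0;  0;  0;  0;  0;  0;  1]]
  | (false, _) =>
    [:: [::  1;  0;  0;  0;  0;  0;  0];
        [::  0;  1;  0;  0;  0;  0;  0];
        [::  0;  0;  1;  0;  0;  0;  0];
        [::  0;  0;  0;  1;  0;  0;  0];
        [::  0;  0;  0;  0;  0;  0;  1];
        [::  0;  0;  0;  0;  0;  1;  0];
        [::  0;  0;  0;  0;  1;  0;  0]]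
  | (true, 0) =>
    [:: [:: -2; -1; -1; -1;  1;  1;  1];
        [:: -1;  0;  0;  0;  1;  0;  0];
        [:: -1;  0;  0;  0;  0;  1;  0];
        [:: -1;  0;  0;  0;  0;  0;  1];
        [:: -2;  0; -1; -1;  1;  1;  1];
        [:: -2; -1;  0; -1;  1;  1;  1];
        [:: -2; -1; -1;  0;  1;  1;  1]]
  | (true, 1) =>
    [:: [:: -2; -1; -1; -1;  1;  1;  1];
        [:: -1;  0;  0;  0;  1;  0;  0];
        [:: -1;  0;  0;  0;  0;  1;  0];
        [:: -1;  0;  0;  0;  0;  0;  1];
        [:: -2; -1;  0; -1;  1;  1;  1];
        [:: -2;  0; -1; -1;  1;  1;  1];
        [:: -2; -1; -1;  0;  1;  1;  1]]
  | (true, 2) =>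
    [:: [:: -2; -1; -1; -1;  1;  1;  1];
        [:: -1;  0;  0;  0;  1;  0;  0];
        [:: -1;  0;  0;  0;  0;  1;  0];
        [:: -1;  0;  0;  0;  0;  0;  1];
        [:: -2; -1; -1;  0;  1;  1;  1];
        [:: -2;  0; -1; -1;  1;  1;  1];
        [:: -2; -1;  0; -1;  1;  1;  1]]
  | (true, 3) =>
    [:: [:: -2; -1; -1; -1;  1;  1;  1];
        [:: -1; -2; -1; -1;  1;  1;  1];
        [:: -1; -1; -2; -1;  1;  1;  1];
        [:: -1; -1; -1; -2;  1;  1;  1];
        [:: -2; -2; -2; -2;  1;  2;  2];
        [:: -2; -2; -2; -2;  2;  1;  2];
        [:: -2; -2; -2; -2;  2;  2;  1]]
  | (true, 4) =>
    [:: [:: -2; -1; -1; -1;  1;  1;  1];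
        [:: -1; -2; -1; -1;  1;  1;  1];
        [:: -1; -1; -2; -1;  1;  1;  1];
        [:: -1; -1; -1; -2;  1;  1;  1];
        [:: -2; -2; -2; -2;  2;  1;  2];
        [:: -2; -2; -2; -2;  1;  2;  2];
        [:: -2; -2; -2; -2;  2;  2;  1]]
  | (true, _) =>
    [:: [:: -2; -1; -1; -1;  1;  1;  1];
        [:: -1; -2; -1; -1;  1;  1;  1];
        [:: -1; -1; -2; -1;  1;  1;  1];
        [:: -1; -1; -1; -2;  1;  1;  1];
        [:: -2; -2; -2; -2;  2;  2;  1];
        [:: -2; -2; -2; -2;  2;  1;  2];
        [:: -2; -2; -2; -2;  1;  2;  2]]
  end.

Definition beta_word (s : bool * nat) : seq nat :=
  match s with
  | (false, 0) => [:: 5; 2; 1; 3; 4; 5; 2; 3; 5]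
  | (false, 1) => [:: 3; 5; 2; 1; 3; 4; 5; 2; 3; 5]
  | (false, 2) => [:: 3; 4; 5; 2; 1; 3; 4; 5; 2; 3; 5]
  | (false, 3) => [::]
  | (false, 4) => [:: 3]
  | (false, _) => [:: 3; 4; 3]
  | (true, 0) => [:: 0; 1; 4; 5; 0; 1; 2; 3; 4; 5; 2; 3; 4; 5; 0]
  | (true, 1) => [:: 0; 2; 5; 2; 1; 3; 4; 5; 0; 1; 3; 5; 0; 2]
  | (true, 2) => [:: 0; 2; 5; 2; 1; 3; 4; 5; 0; 1; 3; 5; 0]
  | (true, 3) => [:: 0; 1; 3; 4; 3; 5; 0; 2; 1; 3; 4; 5; 0; 2; 3; 4; 5; 0; 2; 3; 5; 2]
  | (true, 4) => [:: 0; 1; 4; 3; 5; 0; 2; 1; 3; 4; 5; 0; 2; 3; 4; 5; 0; 2; 3; 5; 2]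
  | (true, _) => [:: 0; 1; 5; 0; 2; 1; 3; 4; 5; 0; 2; 3; 4; 5; 0; 2; 3; 5; 2]
  end.

Definition a_coset_word (k i : nat) : seq nat :=
  nth [::] (nth [::]
    [:: [:: [::]; [::]; [:: 3]; [:: 1]; [:: 1]; [:: 1]];
        [:: [:: 3]; [::]; [::]; [:: 2]; [:: 2]; [:: 2]];
        [:: [:: 1; 2; 4; 2; 1]; [:: 1; 2; 4; 2; 1]; [:: 2; 3; 4; 2; 1; 3; 4; 2];
            [:: 1; 2; 1; 3; 4; 2; 3; 4]; [:: 3; 4; 3]; [:: 4]];
        [:: [:: 1]; [:: 1]; [:: 1]; [::]; [::]; [:: 3]];
        [:: [:: 2]; [:: 2]; [:: 2]; [:: 3]; [:: 3]; [:: 3]]] k) i.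

Definition a1'_coset_word (i : nat) : seq nat :=
  nth [::]
    [:: [:: 0; 1; 4; 0; 2; 1; 4; 2]; [:: 0; 1; 4; 0; 2; 1; 4; 2];
        [:: 4; 0; 2; 3; 4; 0; 2; 3; 4];
        [:: 0; 1; 2; 1; 0]; [:: 0; 1; 2; 1; 0]; [:: 0; 1; 2; 1; 0]] i.

Definition label_val (s : label) : bool * nat := (s.1, val s.2).

Definition act_a1'_val (s : bool * nat) : bool * nat :=
  if (s.2 < 2)%N then (~~ s.1, 1 - s.2)%N else s.

Lemma label_val_act_a (k : 'I_5) (s : label) :
  label_val (act_a k s) = (s.1, swapn k k.+1 s.2).
Proof.
have lt_k5 := ltn_ord k; rewrite /act_a /swapn /label_val.
case: ifP => _ /=; first by rewrite inordK.
by case: ifP => _ //=; rewrite inordK // ltnS ltnW.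
Qed.

Lemma label_val_act_a1' (s : label) :
  label_val (act_a1' s) = act_a1'_val (label_val s).
Proof. by case: s => -[] [[|[|i]] lt_i6]; rewrite /label_val /= ?inordK. Qed.

Definition labels : seq (bool * nat) :=
  [seq (b, i) | b <- [:: false; true], i <- iota 0 6].

Lemma label_val_in_labels (s : label) : label_val s \in labels.
Proof. by case: s => b i; apply: allpairs_f; [case: b | rewrite mem_iota /=]. Qed.

Lemma beta_rows_H1_word :
  all (fun s => (beta_rows s == word_rows 7 H1_gens (beta_word s))
                && all (fun g => g < 6)%N (beta_word s)) labels.
Proof. by vm_compute. Qed.

Definition coset_certified (A : int_rows) (w : seq nat) (s t : bool * nat) : bool :=
  (mul_rows 7 (beta_rows s) A == mul_rows 7 (word_rows 7 GL_gens w) (beta_rows t))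
  && all (fun g => g < 5)%N w.

Lemma a_coset_certified :
  all (fun k => all (fun s =>
    coset_certified (a_rows k) (a_coset_word k s.2) s (s.1, swapn k k.+1 s.2)) labels)
  (iota 0 5).
Proof. by vm_compute. Qed.

Lemma a1'_coset_certified :
  all (fun s => coset_certified a1'_rows (a1'_coset_word s.2) s (act_a1'_val s)) labels.
Proof. by vm_compute. Qed.

Section Proposition45.
Variable C : numClosedFieldType.

Lemma gen_by_foldl (S w : seq 'M[C]_7) :
  all (mem S) w -> gen_by S (foldl mulmx 1%:M w).
Proof.
elim/last_ind: w => [|w A IH]; first by constructor.
rewrite all_rcons foldl_rcons => /andP[SA Sw].
exact: gen_mul (IH Sw) SA.
Qed.

Lemma gen_by_intmx_word gens w : all (fun g => g < size gens)%N w ->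
  gen_by (map (intmx C 7) gens) (intmx C 7 (word_rows 7 gens w)).
Proof.
move=> w_gens; rewrite intmx_word; apply: gen_by_foldl.
rewrite all_map; apply/allP => g /(allP w_gens) g_gens /=.
by rewrite -(nth_map [::] 0) ?mem_nth ?size_map.
Qed.

Lemma tr_intmx i j :
  (i < 7)%N -> (j < 7)%N -> tr C i.+1 j.+1 = intmx C 7 (tperm_rows 7 i j).
Proof. by move=> lt_i7 lt_j7; rewrite /tr /= tperm_mx_intmx. Qed.

Lemma co_vec7 (l : seq C) k : (k < 7)%N -> co (vec7 l) k = nth 0 l k.
Proof. by move=> lt_k7; rewrite /co /vec7 mxE inordK. Qed.

Lemma cV7_coords (x : 'cV[C]_7) :
  x = vec7 [:: co x 0; co x 1; co x 2; co x 3; co x 4; co x 5; co x 6].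
Proof.
apply/colP => -[[|[|[|[|[|[|[|i]]]]]]] lt_i7] //; rewrite !mxE /co //=;
  by congr (x _ _); apply/val_inj; rewrite /= inordK.
Qed.

Definition ellV : 'rV[C]_7 := \row_(j < 7) (if (j < 4)%N then -1 else 1).

Lemma ellV_mul x :
  ellV *m x = (co x 4 + co x 5 + co x 6 - co x 0 - co x 1 - co x 2 - co x 3)%:M.
Proof.
rewrite [x in ellV *m x]cV7_coords; apply/matrixP => i j; rewrite !ord1 !mxE.
rewrite !big_ord_recl big_ord0 !mxE /=; ring.
Qed.

Lemma inV_ellV x : ellV *m x = 1%:M -> inV x.
Proof. by rewrite ellV_mul => /matrixP/(_ 0 0); rewrite !mxE /= !mulr1n. Qed.

Lemma ellV_point : ellV *m vec7 [:: 0; 0; 0; 0; 1; 0; 0] = 1%:M.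
Proof. by rewrite ellV_mul !co_vec7 //=; congr _%:M; ring. Qed.

Lemma eq_mx_on_V (A B : 'M[C]_7) : (forall x, inV x -> A *m x = B *m x) -> A = B.
Proof. by move=> eqAB; apply: eq_mx_on_hyperplane ellV_point _ => x /inV_ellV/eqAB. Qed.

Lemma H1_gensE :
  map (intmx C 7) H1_gens = [:: tr C 1 2; tr C 2 3; tr C 3 4; tr C 5 6; tr C 6 7; X1 C].
Proof. by rewrite /= !tr_intmx. Qed.

Lemma GL_gensE :
  map (intmx C 7) GL_gens
  = [:: tr C 1 2; tr C 2 3; tr C 3 4; tr C 6 7; tr C 5 7 *m X1 C *m tr C 5 7].
Proof. by rewrite /= !intmx_mul !tr_intmx. Qed.

Lemma a_genE (k : 'I_5) : a_gen C k = intmx C 7 (a_rows k).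
Proof. by case: k => -[|[|[|[|[|k]]]]] lt_k5; rewrite /a_gen /a_rows /= ?tr_intmx. Qed.

Definition beta_mx (s : label) : 'M[C]_7 := intmx C 7 (beta_rows (label_val s)).

Lemma beta_mx_on_V s x : inV x -> beta_mx s *m x = u s x.
Proof.
rewrite /inV [x in _ *m x]cV7_coords /u.
move: (co x 0) (co x 1) (co x 2) (co x 3) (co x 4) (co x 5) (co x 6) => a b c d e f g.
move=> inVx; have -> : e = 1 + a + b + c + d - f - g by rewrite -inVx; ring.
case: s => -[] [[|[|[|[|[|[|i]]]]]] lt_i6] //.
all: apply/colP => -[[|[|[|[|[|[|[|r]]]]]]] lt_r7] //.
all: by rewrite !mxE !big_ord_recl big_ord0 !mxE /entry /=; ring.
Qed.

Lemma is_beta_beta_mx s : is_beta s (beta_mx s).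
Proof.
split; last exact: beta_mx_on_V.
have /andP[/eqP beta_word_eq H1_word] :=
  allP beta_rows_H1_word _ (label_val_in_labels s).
rewrite /beta_mx beta_word_eq.
by rewrite /H1 -H1_gensE; apply: gen_by_intmx_word.
Qed.

Lemma is_beta_uniq s b : is_beta s b -> b = beta_mx s.
Proof. by case=> _ bV; apply: eq_mx_on_V => x inVx; rewrite bV // beta_mx_on_V. Qed.

Lemma same_rcoset_certified A w s t :
  coset_certified A w (label_val s) (label_val t) ->
  same_rcoset (@GL_ C) (beta_mx s *m intmx C 7 A) (beta_mx t).
Proof.
case/andP=> /eqP certAw GL_word; exists (intmx C 7 (word_rows 7 GL_gens w)); split.
  by rewrite /GL_ -GL_gensE; apply: gen_by_intmx_word.
by rewrite /beta_mx -!intmx_mul certAw.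
Qed.

End Proposition45.

Theorem proposition4p5 (C : numClosedFieldType) :
  (forall s : label, exists b : 'M[C]_7, is_beta s b) /\
  (forall beta : label -> 'M[C]_7, (forall s, is_beta s (beta s)) ->
     (forall (k : 'I_5) (s : label),
        same_rcoset (@GL_ C) (beta s *m a_gen C k) (beta (act_a k s))) /\
     (forall s : label,
        same_rcoset (@GL_ C) (beta s *m a_1' C) (beta (act_a1' s)))).
Proof.
split=> [s | beta beta_ok]; first by exists (beta_mx C s); apply: is_beta_beta_mx.
have betaE s : beta s = beta_mx C s by apply: is_beta_uniq.
split=> [k s | s]; rewrite !betaE.
- rewrite a_genE; apply: (@same_rcoset_certified C _ (a_coset_word k s.2)).
  have k_iota : val k \in iota 0 5 by rewrite mem_iota ltn_ord.
  rewrite label_val_act_a.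
  exact: (allP (allP a_coset_certified _ k_iota) _ (label_val_in_labels s)).
- rewrite /a_1' tr_intmx //.
  apply: (@same_rcoset_certified C _ (a1'_coset_word s.2)).
  rewrite label_val_act_a1'.
  exact: (allP a1'_coset_certified _ (label_val_in_labels s)).
Qed.
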